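(* Let $s,k,T\in\mathbb{N}$ and let $\mathcal{D}$ be any distribution on $\{0,1\}^T$. Then \[ \mathbf{S}^{s,k}[\mathcal{D}]\le \Pr_{w\sim\mathcal{D}}\bigl[\text{there is a decomposition } w=xyz \text{ with } |x|=s-1,\ |y|\ge k+1, \text{ such that } \mu_x(y)\ge 0\bigr]. \]
   Context: Characteristic strings and forks. A characteristic string is $w=w_1\dots w_n\in\{0,1\}^n$; index $i$ is honest if $w_i=0$ and adversarial if $w_i=1$. A fork for $w$ is a rooted tree with edges directed away from the root $r$ and labeling $\ell:V\to\{0,\dots,n\}$ with (F1) $\ell(r)=0$; (F2) labels strictly increasing along directed paths; (F3) each honest index labels exactly one vertex; (F4) for honest $i<j$ the vertex labeled $i$ has strictly smaller depth than the vertex labeled $j$. Write $F\vdash w$. A vertex is honest if it is the root or labeled by an honest index. A tine is a directed path from the root; its length is its number of edges, $\ell(t)$ the label of its last vertex. For $x$ a prefix of $w$, $F\vdash x$, $F'\vdash w$, $F\sqsubseteq F'$ means $F$ is a subgraph of $F'$ with identical labels. A fork is closed if every leaf is honest; a closed fork has a unique longest tine $\hat t$. Reach and relative margin. For closed $F\vdash w$ and tine $t$: $\mathrm{gap}(t)=\mathrm{length}(\hat t)-\mathrm{length}(t)$, $\mathrm{reserve}(t)=|\{i:w_i=1,\ i>\ell(t)\}|$, $\mathrm{reach}(t)=\mathrm{reserve}(t)-\mathrm{gap}(t)$. For $w=xy$, tines are disjoint over $y$ if they share no edge terminating at a vertex with label $>|x|$ (a tine may be paired with itself). $\mu_x(F)=\max\min\{\mathrm{reach}(t_1),\mathrm{reach}(t_2)\}$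 over pairs disjoint over $y$, and $\mu_x(y)=\max\{\mu_x(F):F\vdash xy\text{ closed}\}$. Settlement. For a fork $F\vdash w_1\dots w_t$ with $s+k\le t$, slot $s$ is not $k$-settled in $F$ if $F$ contains two tines of maximum length which either contain different vertices labeled $s$, or one contains a vertex labeled $s$ and the other does not. Settlement game. For a distribution $\mathcal{D}$ on $\{0,1\}^T$, the $(\mathcal{D},T;s,k)$-settlement game between an adversary $\mathcal{A}$ and a deterministic challenger: (1) $w\in\{0,1\}^T$ is drawn from $\mathcal{D}$ and given to $\mathcal{A}$; (2) $A_0$ is the single-vertex fork for the empty string; (3) for $t=1,\dots,T$: (a) if $w_t=0$, the challenger forms $F_t\vdash w_1\dots w_t$ by adding one vertex labeled $t$ to the end of a longest path of $A_{t-1}$ (ties broken by $\mathcal{A}$); (b) if $w_t=1$, $\mathcal{A}$ chooses an arbitrary fork $F_t\vdash w_1\dots w_t$ with $A_{t-1}\sqsubseteq F_t$; (c) $\mathcal{A}$ chooses an arbitrary fork $A_t\vdash w_1\dots w_t$ with $F_t\sqsubseteq A_t$. $\mathcal{A}$ wins if slot $s$ is not $k$-settled in some $A_t$ with $t\ge s+k$. $\mathbf{S}^{s,k}[\mathcal{D}]=\max_{\mathcal{A}}\Pr[\mathcal{A}\text{ wins}]$. *)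

From HB Require Import structures.
From mathcomp Require Import all_boot all_order all_algebra.
From mathcomp Require Import boolp.
Set Implicit Arguments. Unset Strict Implicit. Unset Printing Implicit Defensive.
Import Order.TTheory GRing.Theory Num.Theory.

(* A characteristic string is a [seq bool]; [true] = 1 (adversarial), [false] = 0 (honest).
   Indices are 1-based: w_i = nth false w i.-1. *)
Definition sym (w : seq bool) (i : nat) : bool := nth false w i.-1.
Definition honest_idx (w : seq bool) (i : nat) : bool := (0 < i <= size w) && ~~ sym w i.
Definition adv_idx (w : seq bool) (i : nat) : bool := (0 < i <= size w) && sym w i.

(* A fork is a list of vertices; vertex v (v < size F) is the entry (parent, label).
   Vertex 0 is the root (its parent field is ignored). *)
Definition fork := seq (nat * nat).
Definition par (F : fork) (v : nat) : nat := (nth (0, 0) F v).1.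
Definition lab (F : fork) (v : nat) : nat := (nth (0, 0) F v).2.

Fixpoint anc_fuel (n : nat) (F : fork) (v : nat) : seq nat :=
  if v == 0 then [:: 0] else
  match n with 0 => [:: v] | n'.+1 => v :: anc_fuel n' F (par F v) end.
Definition tine (F : fork) (v : nat) : seq nat := anc_fuel (size F) F v.
Definition depth (F : fork) (v : nat) : nat := (size (tine F v)).-1.

Definition is_fork (w : seq bool) (F : fork) : Prop :=
  [/\ 0 < size F,
      lab F 0 = 0,
      (forall v, 0 < v < size F ->
         [/\ par F v < size F, lab F (par F v) < lab F v & lab F v <= size w]),
      (forall i, honest_idx w i ->
         count (fun v => lab F v == i) (iota 1 (size F).-1) = 1)
    & (forall i j u v, honest_idx w i -> honest_idx w j -> i < j ->
         0 < u < size F -> 0 < v < size F -> lab F u = i -> lab F v = j ->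
         depth F u < depth F v)].

Definition honest_vertex (w : seq bool) (F : fork) (v : nat) : bool :=
  (v == 0) || honest_idx w (lab F v).
Definition is_leaf (F : fork) (v : nat) : bool :=
  (v < size F) && ~~ has (fun u => par F u == v) (iota 1 (size F).-1).
Definition closed (w : seq bool) (F : fork) : Prop :=
  forall v, is_leaf F v -> honest_vertex w F v.

Definition maxlen (F : fork) : nat := \max_(v < size F) depth F v.

Definition gap (F : fork) (v : nat) : nat := maxlen F - depth F v.
Definition reserve (w : seq bool) (F : fork) (v : nat) : nat :=
  count (fun i => adv_idx w i && (lab F v < i)) (iota 1 (size w)).
Definition reach (w : seq bool) (F : fork) (v : nat) : int :=
  (reserve w F v)%:Z - (gap F v)%:Z.

(* tines ending at t1, t2 are disjoint over y (where m = |x|): they share no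
   edge terminating at a vertex with label > m *)
Definition disjoint_over (m : nat) (F : fork) (t1 t2 : nat) : bool :=
  all (fun u => (u \in tine F t2) ==> (lab F u <= m)) (tine F t1).

(* mu_x(F) for F |- xy, m = |x|, w = xy; the pair (root, root) is always admissible *)
Definition mu_fork (m : nat) (w : seq bool) (F : fork) : int :=
  \big[Num.max/Num.min (reach w F 0) (reach w F 0)]_(p : 'I_(size F) * 'I_(size F)
      | disjoint_over m F p.1 p.2) Num.min (reach w F p.1) (reach w F p.2).

(* mu_x(y) >= 0, where mu_x(y) is the maximum of mu_x(F) over closed F |- xy *)
Definition rel_margin_nonneg (x y : seq bool) : Prop :=
  exists F, [/\ is_fork (x ++ y) F, closed (x ++ y) F & (0 <= mu_fork (size x) (x ++ y) F)%R].

Definition not_settled (s : nat) (F : fork) : Prop :=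
  exists u1 u2, [/\ u1 < size F, u2 < size F, depth F u1 = maxlen F, depth F u2 = maxlen F &
    (exists a b, [/\ a \in tine F u1, b \in tine F u2, lab F a = s, lab F b = s & a <> b])
    \/ ((exists a, a \in tine F u1 /\ lab F a = s) /\
        ~ (exists b, b \in tine F u2 /\ lab F b = s))].

(* F is a subgraph of G with identical labels: G extends F's vertex list *)
Definition subfork (F G : fork) : bool := prefix F G.

(* A play of the game: F_t = Fp t (t >= 1), A_t = Ap t (t >= 0). *)
Record play := Play { Fp : nat -> fork; Ap : nat -> fork }.

Definition legal_play (w : seq bool) (P : play) : Prop :=
  Ap P 0 = [:: (0, 0)] /\
  forall t, 0 < t <= size w ->
    (if sym w t then
       is_fork (take t w) (Fp P t) /\ subfork (Ap P t.-1) (Fp P t)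
     else exists v, [/\ v < size (Ap P t.-1), depth (Ap P t.-1) v = maxlen (Ap P t.-1)
                      & Fp P t = rcons (Ap P t.-1) (v, t)])
    /\ is_fork (take t w) (Ap P t) /\ subfork (Fp P t) (Ap P t).

Definition wins (s k : nat) (w : seq bool) (P : play) : Prop :=
  exists t, s + k <= t <= size w /\ not_settled s (Ap P t).

Definition distribution (R : realFieldType) (T : nat) (D : {ffun T.-tuple bool -> R}) : Prop :=
  (forall w, (0 <= D w)%R) /\ (\sum_w D w = 1)%R.

Definition Pr (R : realFieldType) (T : nat) (D : {ffun T.-tuple bool -> R})
  (E : T.-tuple bool -> Prop) : R := (\sum_(w | `[< E w >]) D w)%R.

(* If slot [s] is unsettled in some [A_t], the fork [A_t] for w_1 ... w_t alone
   witnesses mu_x(y) >= 0 for x = w_1 ... w_(s-1) and y = w_s ... w_t, so the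
   bound holds string by string.  Pruning [A_t] to the vertices that lie on the
   tine of an honest vertex gives a closed fork for xy.  Cut each of the two
   longest tines that disagree on slot [s] at its last surviving vertex: the
   removed vertices are adversarial with distinct labels beyond the cut, so they
   pay for its gap and its reach is nonnegative.  The cut tines share no vertex
   labeled [s] or later, since such a vertex would have the vertex labeled [s]
   of the first tine as an ancestor and put it on the second tine as well.
   Slot 0 is always settled: only the root is labeled 0. *)

From Pilot Require Import Defs.
From HB Require Import structures.
From mathcomp Require Import all_boot all_order all_algebra.
From mathcomp Require Import boolp.
Import Order.TTheory GRing.Theory Num.Theory.
Set Implicit Arguments. Unset Strict Implicit. Unset Printing Implicit Defensive.

Definition wf_fork (F : fork) : Prop :=
  [/\ 0 < size F, lab F 0 = 0 &
     forall v, 0 < v < size F -> par F v < size F /\ lab F (par F v) < lab F v].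

Lemma fork_wf w F : is_fork w F -> wf_fork F.
Proof. by case=> sz0 lab0 tree _ _; split=> // v /tree[]. Qed.

Lemma wf_fork1 : wf_fork [:: (0, 0)].
Proof. by split=> // -[|[]]. Qed.

Lemma anc_fuel0 f F : anc_fuel f F 0 = [:: 0].
Proof. by case: f. Qed.

Lemma tine0 F : tine F 0 = [:: 0].
Proof. exact: anc_fuel0. Qed.

Definition lab_gt (F : fork) : rel nat := [rel a b | lab F b < lab F a].

Lemma lab_gt_trans F : transitive (lab_gt F).
Proof. by move=> a b c /= ba cb; exact: ltn_trans cb ba. Qed.

Lemma sorted_lab_gt_uniq F s : sorted (lab_gt F) s -> uniq s.
Proof.
by apply: sorted_uniq; [exact: lab_gt_trans | move=> x; rewrite /lab_gt /= ltnn].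
Qed.

Section WellFormedFork.

Variable F : fork.
Hypothesis wfF : wf_fork F.

Lemma par_wf v : 0 < v < size F -> par F v < size F /\ lab F (par F v) < lab F v.
Proof. by case: wfF => _ _; apply. Qed.

Lemma wf_fork_ind (P : nat -> Prop) : P 0 ->
  (forall v, 0 < v < size F -> P (par F v) -> P v) -> forall v, v < size F -> P v.
Proof.
move=> P0 Ppar v; have [m] : exists m, lab F v < m by exists (lab F v).+1.
elim: m v => // m IHm v ltvm ltvF; case: (posnP v) => [->//|v_gt0].
have hv : 0 < v < size F by rewrite v_gt0.
have [ltpF ltp] := par_wf hv; apply: Ppar => //.
by apply: IHm => //; exact: leq_trans ltp ltvm.
Qed.

Lemma lab_gt0 v : 0 < v < size F -> 0 < lab F v.
Proof. by move/par_wf=> [_]; exact: leq_ltn_trans. Qed.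

(* Fuel [lab F v] always suffices to reach the root, since labels decrease
   along parents; the fuel [size F] of [tine] is shown to suffice by counting
   the distinct vertices of the path. *)
Definition ancestors (v : nat) : seq nat := anc_fuel (lab F v) F v.

Lemma anc_fuel_eq f g v : v < size F -> lab F v <= f -> lab F v <= g ->
  anc_fuel f F v = anc_fuel g F v.
Proof.
elim: f g v => [|f IHf] g v ltvF lef leg; case: (posnP v) => [->|v_gt0];
  rewrite ?anc_fuel0 //; have hv : 0 < v < size F by rewrite v_gt0.
- by move: (lab_gt0 hv); rewrite ltnNge lef.
- have [ltpF ltp] := par_wf hv.
  case: g leg => [|g] leg; first by move: (lab_gt0 hv); rewrite ltnNge leg.
  rewrite /= (negbTE (lt0n_neq0 v_gt0)); congr (_ :: _).
  by apply: IHf => //; rewrite -ltnS (leq_trans ltp).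
Qed.

Lemma ancestors0 : ancestors 0 = [:: 0].
Proof. exact: anc_fuel0. Qed.

Lemma ancestorsS v : 0 < v < size F -> ancestors v = v :: ancestors (par F v).
Proof.
move=> hv; have [ltpF ltp] := par_wf hv; have /andP[v_gt0 _] := hv.
rewrite /ancestors; case E: (lab F v) ltp => [|l] ltp //=.
rewrite (negbTE (lt0n_neq0 v_gt0)); congr (_ :: _).
exact: anc_fuel_eq.
Qed.

Lemma ancestors_spec v : v < size F ->
  [/\ sorted (lab_gt F) (ancestors v), all (gtn (size F)) (ancestors v)
    & head 0 (ancestors v) = v].
Proof.
move: v; apply: wf_fork_ind; first by rewrite ancestors0 /=; case: wfF => ->.
move=> v hv [sorted_p all_p head_p]; have [ltpF ltp] := par_wf hv.
rewrite ancestorsS //=; case/andP: hv => _ ->; split=> //.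
by case: (ancestors (par F v)) sorted_p head_p => //= x l -> ->; rewrite andbT.
Qed.

Lemma size_ancestors v : v < size F -> size (ancestors v) <= size F.
Proof.
move=> ltvF; have [sorted_v all_v _] := ancestors_spec ltvF.
rewrite -(size_iota 0 (size F)); apply: uniq_leq_size.
  exact: sorted_lab_gt_uniq sorted_v.
by move=> x /(allP all_v); rewrite mem_iota.
Qed.

Lemma anc_fuel_ancestors f v : v < size F -> size (ancestors v) <= f.+1 ->
  anc_fuel f F v = ancestors v.
Proof.
elim: f v => [|f IHf] v ltvF; case: (posnP v) => [->|v_gt0];
  rewrite ?anc_fuel0 ?ancestors0 //; have hv : 0 < v < size F by rewrite v_gt0.
all: have [ltpF _] := par_wf hv; rewrite ancestorsS //= (negbTE (lt0n_neq0 v_gt0)).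
  by case: (ancestors (par F v)).
by rewrite ltnS => size_p; rewrite IHf.
Qed.

Lemma tine_ancestors v : v < size F -> tine F v = ancestors v.
Proof. by move=> ltvF; apply: anc_fuel_ancestors => //; exact/leqW/size_ancestors. Qed.

Lemma tineS v : 0 < v < size F -> tine F v = v :: tine F (par F v).
Proof.
move=> hv; have [ltpF _] := par_wf hv; have /andP[_ ltvF] := hv.
by rewrite !tine_ancestors // ancestorsS.
Qed.

Lemma sorted_tine v : v < size F -> sorted (lab_gt F) (tine F v).
Proof. by move=> ltvF; rewrite tine_ancestors //; case: (ancestors_spec ltvF). Qed.

Lemma uniq_tine v : v < size F -> uniq (tine F v).
Proof. by move/sorted_tine/sorted_lab_gt_uniq. Qed.

Lemma mem_tine_lt v a : v < size F -> a \in tine F v -> a < size F.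
Proof.
move=> ltvF; rewrite tine_ancestors //; have [_ /allP all_v _] := ancestors_spec ltvF.
exact: all_v.
Qed.

Lemma mem_tine_self v : v < size F -> v \in tine F v.
Proof.
move=> ltvF; have : tine F v != [::] by rewrite /tine; case: (size F) => [|n] /=; case: (v == 0).
rewrite tine_ancestors //; have [_ _] := ancestors_spec ltvF.
by case: (ancestors v) => [|x l] //= -> _; rewrite inE eqxx.
Qed.

Lemma mem_root_tine v : v < size F -> 0 \in tine F v.
Proof.
move: v; apply: wf_fork_ind; first by rewrite tine0 inE.
by move=> v hv root_p; rewrite tineS // inE root_p orbT.
Qed.

Lemma drop_tine v k : v < size F -> k < size (tine F v) ->
  drop k (tine F v) = tine F (nth 0 (tine F v) k).
Proof.
elim: k v => [|k IHk] v ltvF.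
  have [_ _ head_v] := ancestors_spec ltvF.
  by rewrite drop0 nth0 tine_ancestors // head_v -tine_ancestors.
case: (posnP v) => [->|v_gt0]; first by rewrite tine0.
have hv : 0 < v < size F by rewrite v_gt0.
by have [ltpF _] := par_wf hv; rewrite tineS //= ltnS; apply: IHk.
Qed.

Lemma sub_tine v a : v < size F -> a \in tine F v -> {subset tine F a <= tine F v}.
Proof.
move=> ltvF a_v x; rewrite -(nth_index 0 a_v) -drop_tine ?index_mem //.
exact: mem_drop.
Qed.

Lemma lab_tine_le v a : v < size F -> a \in tine F v -> lab F a <= lab F v.
Proof.
move: v; apply: wf_fork_ind; first by rewrite tine0 inE => /eqP ->.
move=> v hv IHv; rewrite tineS // inE => /orP[/eqP -> //|/IHv le_ap].
by have [_ ltp] := par_wf hv; exact: leq_trans le_ap (ltnW ltp).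
Qed.

Lemma lab_tine_lt v a : v < size F -> a \in tine F v -> a != v -> lab F a < lab F v.
Proof.
move=> ltvF; case: (posnP v) => [->|v_gt0]; first by rewrite tine0 inE => ->.
have hv : 0 < v < size F by rewrite v_gt0.
have [ltpF ltp] := par_wf hv; rewrite tineS // inE => /orP[->//|a_p] _.
exact: leq_ltn_trans (lab_tine_le ltpF a_p) ltp.
Qed.

Lemma mem_tine_lab_le v a b : v < size F -> a \in tine F v -> b \in tine F v ->
  lab F a <= lab F b -> a \in tine F b.
Proof.
move: v; apply: wf_fork_ind; first by rewrite tine0 !inE => /eqP -> /eqP ->; rewrite tine0 inE.
move=> v hv IHv; have [ltpF ltp] := par_wf hv; have /andP[_ ltvF] := hv.
rewrite tineS // !inE => /orP[/eqP a_v|a_p] /orP[/eqP b_v|b_p] le_ab.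
- by rewrite a_v b_v mem_tine_self.
- by move: le_ab; rewrite a_v leqNgt (leq_ltn_trans (lab_tine_le ltpF b_p) ltp).
- by rewrite b_v tineS // inE a_p orbT.
- exact: IHv.
Qed.

Lemma tine_lab_inj v a b : v < size F -> a \in tine F v -> b \in tine F v ->
  lab F a = lab F b -> a = b.
Proof.
move=> ltvF a_v b_v eq_ab; have a_b := mem_tine_lab_le ltvF a_v b_v (eq_leq eq_ab).
apply/eqP; apply: contraTT (eq_leq (esym eq_ab)) => neq_ab.
by rewrite -ltnNge; apply: lab_tine_lt a_b neq_ab; exact: mem_tine_lt b_v.
Qed.

Lemma tine_child h a : h < size F -> a \in tine F h -> a != h ->
  exists2 c, c \in tine F h & [/\ 0 < c, c < size F & par F c = a].
Proof.
move: h; apply: wf_fork_ind; first by rewrite tine0 inE => ->.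
move=> h hh IHh; have [ltpF _] := par_wf hh; have /andP[h_gt0 lthF] := hh.
rewrite tineS // inE => /orP[->//|a_p] _.
have [eq_ap|neq_ap] := eqVneq a (par F h).
  by exists h; rewrite ?inE ?eqxx.
by have [c c_p c_spec] := IHh a_p neq_ap; exists c; rewrite // inE c_p orbT.
Qed.

End WellFormedFork.

Section Restriction.

Variables (F : fork) (K : pred nat).
Hypotheses (wfF : wf_fork F) (K0 : K 0)
  (K_par : forall v, 0 < v < size F -> K v -> K (par F v)).

Definition kept : seq nat := filter K (iota 0 (size F)).

(* Vertex [i] of the restriction is vertex [nth 0 kept i] of [F], and vertex
   [u] of [F] becomes vertex [index u kept]. *)
Definition restrict : fork := [seq (index (par F v) kept, lab F v) | v <- kept].

Local Notation orig i := (nth 0 kept i).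
Local Notation rank u := (index u kept).

Lemma size_restrict : size restrict = size kept.
Proof. exact: size_map. Qed.

Lemma par_restrict i : i < size kept -> par restrict i = rank (par F (orig i)).
Proof. by move=> lti; rewrite /par /restrict (nth_map 0). Qed.

Lemma lab_restrict i : i < size kept -> lab restrict i = lab F (orig i).
Proof. by move=> lti; rewrite /lab /restrict (nth_map 0). Qed.

Lemma keptE : kept = 0 :: filter K (iota 1 (size F).-1).
Proof. by case: wfF; rewrite /kept; case: (size F) => //= n _ _ _; rewrite K0. Qed.

Lemma orig0 : orig 0 = 0.
Proof. by rewrite keptE. Qed.

Lemma rank0 : rank 0 = 0.
Proof. by rewrite keptE. Qed.

Lemma orig_spec i : i < size kept -> [/\ K (orig i), orig i < size F & rank (orig i) = i].
Proof.
move=> lti; have := mem_nth 0 lti; rewrite mem_filter mem_iota => /andP[-> /= ->].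
by rewrite index_uniq // filter_uniq // iota_uniq.
Qed.

Lemma rank_spec u : K u -> u < size F -> rank u < size kept /\ orig (rank u) = u.
Proof.
move=> Ku ltuF; have u_kept : u \in kept by rewrite mem_filter mem_iota Ku.
by rewrite index_mem u_kept nth_index.
Qed.

Lemma orig_gt0 i : 0 < i < size kept -> 0 < orig i.
Proof.
case/andP=> i_gt0 lti; rewrite lt0n; apply: contraTneq i_gt0 => orig_i.
by have [_ _ <-] := orig_spec lti; rewrite orig_i rank0.
Qed.

Lemma rank_gt0 u : 0 < u < size F -> K u -> 0 < rank u.
Proof.
case/andP=> u_gt0 ltuF Ku; have [_ orig_u] := rank_spec Ku ltuF.
by rewrite lt0n; apply: contraTneq u_gt0 => rank_u; rewrite -orig_u rank_u orig0.
Qed.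

Lemma restrict_wf : wf_fork restrict.
Proof.
have size_gt0 : 0 < size kept by rewrite keptE.
split; rewrite ?size_restrict ?lab_restrict ?orig0 //; first by case: wfF.
move=> i /andP[i_gt0 lti]; have [Ki ltiF _] := orig_spec lti.
have hv : 0 < orig i < size F by rewrite orig_gt0 ?i_gt0.
have [ltpF ltp] := par_wf wfF hv; have Kp := K_par hv Ki.
have [ltr orig_r] := rank_spec Kp ltpF.
by rewrite par_restrict // !lab_restrict // orig_r.
Qed.

Lemma tine_restrict i : i < size kept ->
  tine restrict i = [seq rank u | u <- tine F (orig i)].
Proof.
move=> lti; have [Ki ltiF rank_i] := orig_spec lti; rewrite -{1}rank_i.
move: (orig i) ltiF Ki; apply: (wf_fork_ind wfF) => [|v hv IHv] Kv.
  by rewrite rank0 !tine0 /= rank0.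
have [ltpF _] := par_wf wfF hv; have /andP[_ ltvF] := hv.
have [ltr orig_r] := rank_spec Kv ltvF.
have hr : 0 < rank v < size restrict by rewrite rank_gt0 // size_restrict ltr.
by rewrite (tineS wfF hv) (tineS restrict_wf hr) /= par_restrict // orig_r IHv // K_par.
Qed.

Lemma depth_restrict i : i < size kept -> depth restrict i = depth F (orig i).
Proof. by move=> lti; rewrite /depth tine_restrict // size_map. Qed.

Lemma maxlen_restrict : maxlen restrict <= maxlen F.
Proof.
apply/bigmax_leqP => i _; have lti : i < size kept by rewrite -size_restrict.
have [_ ltiF _] := orig_spec lti; rewrite depth_restrict //.
exact: (leq_bigmax_cond (Ordinal ltiF)).
Qed.

Lemma count_restrict (p : pred nat) :
  count (fun i => p (lab restrict i)) (iota 1 (size restrict).-1)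
  = count (fun v => K v && p (lab F v)) (iota 1 (size F).-1).
Proof.
have size_kept : size kept = (size (filter K (iota 1 (size F).-1))).+1 by rewrite keptE.
rewrite size_restrict (@eq_in_count _ _ (fun i => p (lab F (orig i)))); last first.
  move=> i; rewrite mem_iota size_kept /= add1n => /andP[_ lti].
  by rewrite lab_restrict // size_kept.
rewrite -(count_map (nth 0 kept) (fun v => p (lab F v))) map_nth_iota; last first.
  by rewrite size_kept subn1.
rewrite size_kept /= {1}keptE /= drop0 take_size count_filter.
by apply: eq_count => v /=; rewrite andbC.
Qed.

Lemma fork_restrict w : is_fork w F ->
  (forall v, v < size F -> honest_vertex w F v -> K v) -> is_fork w restrict.
Proof.
case=> size_gt0 _ tree unique_honest honest_depth honest_K.
have [sizeR_gt0 labR0 parR] := restrict_wf; rewrite size_restrict in sizeR_gt0 parR.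
split; rewrite ?size_restrict //.
- move=> i hi; have [? ?] := parR i hi; split=> //.
  have /andP[i_gt0 lti] := hi; have [_ ltiF _] := orig_spec lti.
  by rewrite lab_restrict //; have [] := tree (orig i); rewrite ?orig_gt0 ?i_gt0.
- move=> l honest_l; rewrite -[RHS](unique_honest l honest_l).
  rewrite -size_restrict (count_restrict (pred1 l)); apply: eq_in_count => v.
  rewrite mem_iota add1n prednK // => /andP[_ ltvF] /=.
  case: eqP => [lab_v|]; last by rewrite andbF.
  by rewrite honest_K // /honest_vertex lab_v honest_l orbT.
- move=> l l' i j honest_l honest_l' ltl /andP[i_gt0 lti] /andP[j_gt0 ltj] lab_i lab_j.
  have [_ ltiF _] := orig_spec lti; have [_ ltjF _] := orig_spec ltj.
  rewrite !depth_restrict //; apply: (honest_depth l l') => //.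
  + by rewrite orig_gt0 ?i_gt0.
  + by rewrite orig_gt0 ?j_gt0.
  + by rewrite -lab_restrict.
  + by rewrite -lab_restrict.
Qed.

Lemma mem_tine_K v a : K v -> v < size F -> a \in tine F v -> K a.
Proof.
move=> Kv ltvF; move: v ltvF Kv; apply: (wf_fork_ind wfF).
  by rewrite tine0 inE => _ /eqP ->.
move=> v hv IHv Kv; rewrite tineS // inE => /orP[/eqP -> //|].
by apply: IHv; exact: K_par.
Qed.

Lemma reach_restrict w v : K v -> v < size F ->
  (reach w F v <= reach w restrict (rank v))%R.
Proof.
move=> Kv ltvF; have [ltr orig_r] := rank_spec Kv ltvF.
rewrite /reach /reserve lab_restrict // orig_r lerD2l lerN2 lez_nat /gap.
by rewrite depth_restrict // orig_r leq_sub2r // maxlen_restrict.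
Qed.

Lemma disjoint_over_restrict m v1 v2 : K v1 -> K v2 -> v1 < size F -> v2 < size F ->
  (forall a, a \in tine F v1 -> a \in tine F v2 -> lab F a <= m) ->
  disjoint_over m restrict (rank v1) (rank v2).
Proof.
move=> Kv1 Kv2 ltv1F ltv2F common_le.
have [ltr1 orig_r1] := rank_spec Kv1 ltv1F; have [ltr2 orig_r2] := rank_spec Kv2 ltv2F.
apply/allP=> x; rewrite tine_restrict // orig_r1 => /mapP[a a_v1 ->].
rewrite tine_restrict // orig_r2; apply/implyP=> /mapP[b b_v2 rank_ab].
have Ka := mem_tine_K Kv1 ltv1F a_v1; have Kb := mem_tine_K Kv2 ltv2F b_v2.
have [ltra orig_ra] := rank_spec Ka (mem_tine_lt wfF ltv1F a_v1).
have [_ orig_rb] := rank_spec Kb (mem_tine_lt wfF ltv2F b_v2).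
have eq_ab : a = b by rewrite -orig_ra rank_ab orig_rb.
by rewrite lab_restrict // orig_ra common_le // eq_ab.
Qed.

End Restriction.

Definition honest_closure (w : seq bool) (F : fork) : pred nat :=
  fun v => has (fun h => honest_vertex w F h && (v \in tine F h)) (iota 0 (size F)).

Section HonestClosure.

Variables (w : seq bool) (F : fork).
Hypothesis wfF : wf_fork F.

Local Notation K := (honest_closure w F).

Lemma honest_closureP v :
  reflect (exists2 h, h < size F & honest_vertex w F h && (v \in tine F h)) (K v).
Proof.
by apply: (iffP hasP) => -[h lthF honest_h]; exists h; rewrite // mem_iota in lthF *.
Qed.

Lemma honest_closure_honest v : v < size F -> honest_vertex w F v -> K v.
Proof.
move=> ltvF honest_v; apply/honest_closureP.
by exists v; rewrite ?honest_v ?mem_tine_self.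
Qed.

Lemma honest_closure0 : K 0.
Proof. by case: wfF => size_gt0 _ _; apply: honest_closure_honest; rewrite /honest_vertex. Qed.

Lemma honest_closure_par v : 0 < v < size F -> K v -> K (par F v).
Proof.
move=> hv /honest_closureP[h lthF /andP[honest_h v_h]]; have /andP[_ ltvF] := hv.
have [ltpF _] := par_wf wfF hv; apply/honest_closureP; exists h; rewrite // honest_h.
by apply: (sub_tine wfF lthF v_h); rewrite tineS // inE mem_tine_self ?orbT.
Qed.

Local Notation G := (restrict F K).

(* A dishonest vertex [v] is kept only because it lies strictly below some
   honest vertex [h], and the child of [v] towards [h] is kept as well. *)
Lemma closed_restrict_honest : Defs.closed w G.
Proof.
move=> j /andP[ltj no_child]; rewrite size_restrict in ltj no_child.
apply/negPn/negP => dishonest_j.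
have [Kv ltvF rank_v] := orig_spec ltj.
have j_neq0 : j != 0 by apply: contraNneq dishonest_j => ->; rewrite /honest_vertex.
have v_gt0 : 0 < nth 0 (kept F K) j.
  by apply: (orig_gt0 wfF honest_closure0); rewrite lt0n j_neq0.
have /honest_closureP[h lthF /andP[honest_h v_h]] := Kv.
have [eq_vh|neq_vh] := eqVneq (nth 0 (kept F K) j) h.
  move: dishonest_j; rewrite /honest_vertex (negbTE j_neq0) lab_restrict //.
  by move: honest_h; rewrite -eq_vh /honest_vertex (negbTE (lt0n_neq0 v_gt0)) => /= ->.
have [c c_h [c_gt0 ltcF par_c]] := tine_child wfF lthF v_h neq_vh.
have Kc : K c by apply/honest_closureP; exists h; rewrite ?honest_h.
have [ltr orig_r] := rank_spec Kc ltcF.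
move/negP: no_child; apply; apply/hasP; exists (index c (kept F K)).
  by rewrite mem_iota add1n (ltn_predK ltj) ltr (rank_gt0 wfF honest_closure0) ?c_gt0.
by rewrite par_restrict // orig_r par_c rank_v.
Qed.

End HonestClosure.

Lemma size_le_reserve w F v (L : seq nat) : is_fork w F -> uniq [seq lab F x | x <- L] ->
  (forall x, x \in L -> [/\ 0 < x < size F, ~~ honest_vertex w F x & lab F v < lab F x]) ->
  size L <= reserve w F v.
Proof.
move=> fF uniq_L L_adv; have [_ _ tree _ _] := fF.
rewrite -(size_map (lab F)) /reserve -size_filter.
apply: uniq_leq_size => // _ /mapP[x x_L ->].
have [hx dishonest_x lt_vx] := L_adv x x_L; have [_ _ le_xw] := tree x hx.
have lab_x_gt0 := lab_gt0 (fork_wf fF) hx; have /andP[x_gt0 _] := hx.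
rewrite mem_filter mem_iota /adv_idx lab_x_gt0 add1n ltnS le_xw lt_vx !andbT /=.
move: dishonest_x; rewrite /honest_vertex /honest_idx (negbTE (lt0n_neq0 x_gt0)).
by rewrite lab_x_gt0 le_xw negbK.
Qed.

(* The vertices below the last kept vertex [v] of a longest tine are not on
   the tine of any honest vertex, so they are adversarial with distinct labels
   above [lab F v]; they pay for the gap of [v]. *)
Lemma reach_last_kept w F u : is_fork w F -> u < size F -> depth F u = maxlen F ->
  exists2 v, v \in tine F u & honest_closure w F v && (0 <= reach w F v)%R.
Proof.
move=> fF ltuF depth_u; have wfF := fork_wf fF; set K := honest_closure w F.
set s := tine F u; set k := find K s; set v := nth 0 s k.
have has_K : has K s by apply/hasP; exists 0; [exact: mem_root_tine | exact: honest_closure0].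
have lt_ks : k < size s by rewrite -has_find.
have Kv : K v := nth_find 0 has_K.
exists v; first exact: mem_nth.
rewrite Kv /= /reach subr_ge0 lez_nat /gap -depth_u.
have -> : depth F u - depth F v = k.
  rewrite /depth -/s -(drop_tine wfF ltuF lt_ks) size_drop -/s.
  by case: (size s) lt_ks => // n; rewrite ltnS => le_kn; rewrite subSn //= subKn.
have size_L : size (take k s) = k by rewrite size_takel // ltnW.
rewrite -{1}size_L; apply: size_le_reserve => //.
  rewrite map_inj_in_uniq ?take_uniq ?uniq_tine // => x y /mem_take x_s /mem_take y_s.
  exact: (tine_lab_inj wfF ltuF).
move=> x x_L; have x_s := mem_take x_L; have ltx := index_ltn x_L.
have notKx : K x = false by rewrite -(nth_index 0 x_s); exact: before_find.
have ltxF := mem_tine_lt wfF ltuF x_s.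
have x_gt0 : 0 < x by rewrite lt0n; apply: contraFneq notKx => ->; exact: honest_closure0.
split; first by rewrite x_gt0.
  by apply: contraFN notKx; exact: honest_closure_honest.
rewrite -(nth_index 0 x_s); apply: (sorted_ltn_nth (@lab_gt_trans F)) => //.
- exact: sorted_tine.
- by rewrite inE (ltn_trans ltx lt_ks).
Qed.

Definition tines_split_at (s : nat) (F : fork) (u1 u2 : nat) : Prop :=
  (exists a b, [/\ a \in tine F u1, b \in tine F u2, lab F a = s, lab F b = s & a <> b])
  \/ ((exists a, a \in tine F u1 /\ lab F a = s) /\
      ~ (exists b, b \in tine F u2 /\ lab F b = s)).

Lemma tines_split_common_lab F m u1 u2 a : wf_fork F -> u1 < size F -> u2 < size F ->
  tines_split_at m.+1 F u1 u2 -> a \in tine F u1 -> a \in tine F u2 -> lab F a <= m.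
Proof.
move=> wfF ltu1F ltu2F split_u a_u1 a_u2; rewrite leqNgt; apply/negP => lt_ma.
have below_a a' : a' \in tine F u1 -> lab F a' = m.+1 -> a' \in tine F u2.
  move=> a'_u1 lab_a'; apply: (sub_tine wfF ltu2F a_u2).
  by apply: (mem_tine_lab_le wfF ltu1F a'_u1 a_u1); rewrite lab_a'.
case: split_u => [[a' [b [a'_u1 b_u2 lab_a' lab_b neq_a'b]]] | [[a' [a'_u1 lab_a']] no_b]].
  apply: neq_a'b; apply: (tine_lab_inj wfF ltu2F (below_a a' a'_u1 lab_a') b_u2).
  by rewrite lab_a' lab_b.
by apply: no_b; exists a'; split; [exact: below_a | ].
Qed.

Lemma unsettled_rel_margin w F m u1 u2 : is_fork w F -> u1 < size F -> u2 < size F ->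
  depth F u1 = maxlen F -> depth F u2 = maxlen F -> tines_split_at m.+1 F u1 u2 ->
  exists F', [/\ is_fork w F', Defs.closed w F' & (0 <= mu_fork m w F')%R].
Proof.
move=> fF ltu1F ltu2F depth_u1 depth_u2 split_u; have wfF := fork_wf fF.
set K := honest_closure w F; have K0 : K 0 := honest_closure0 w wfF.
have K_par := @honest_closure_par w F wfF.
exists (restrict F K); split.
- by apply: fork_restrict => // v; exact: honest_closure_honest wfF v.
- exact: closed_restrict_honest wfF.
have [v1 v1_u1 /andP[Kv1 reach_v1]] := reach_last_kept fF ltu1F depth_u1.
have [v2 v2_u2 /andP[Kv2 reach_v2]] := reach_last_kept fF ltu2F depth_u2.
have ltv1F := mem_tine_lt wfF ltu1F v1_u1; have ltv2F := mem_tine_lt wfF ltu2F v2_u2.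
have [ltr1 _] := rank_spec Kv1 ltv1F; have [ltr2 _] := rank_spec Kv2 ltv2F.
rewrite -size_restrict in ltr1 ltr2.
apply: (bigmax_sup (Ordinal ltr1, Ordinal ltr2)) => /=.
  apply: (disjoint_over_restrict wfF K0 K_par) => // a a_v1 a_v2.
  apply: (tines_split_common_lab wfF ltu1F ltu2F split_u).
    exact: (sub_tine wfF ltu1F v1_u1 a_v1).
  exact: (sub_tine wfF ltu2F v2_u2 a_v2).
rewrite le_min; apply/andP; split.
  exact: le_trans reach_v1 (reach_restrict wfF K0 K_par w Kv1 ltv1F).
exact: le_trans reach_v2 (reach_restrict wfF K0 K_par w Kv2 ltv2F).
Qed.

Lemma settled0 F : wf_fork F -> ~ not_settled 0 F.
Proof.
move=> wfF [u1 [u2 [ltu1F ltu2F _ _ split_u]]].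
have lab0_root u a : u < size F -> a \in tine F u -> lab F a = 0 -> a = 0.
  move=> ltuF a_u lab_a; apply/eqP; rewrite -leqn0 leqNgt; apply/negP => a_gt0.
  have := @lab_gt0 F wfF a; rewrite a_gt0 (mem_tine_lt wfF ltuF a_u) lab_a.
  by move=> /(_ isT).
case: split_u => [[a [b [a_u1 b_u2 lab_a lab_b]]] | [_ no_root]].
  by rewrite (lab0_root u1 a) // (lab0_root u2 b).
by apply: no_root; exists 0; split; [exact: mem_root_tine | case: wfF].
Qed.

Lemma wins_rel_margin s k (w : seq bool) P : legal_play w P -> wins s k w P ->
  exists x y z : seq bool,
    [/\ w = x ++ y ++ z, (size x).+1 = s, (k < size y)%N & rel_margin_nonneg x y].
Proof.
move=> [A0 legal_t] [t [/andP[le_skt le_tw] unsettled]].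
have fork_t : 0 < t -> is_fork (take t w) (Ap P t).
  by move=> t_gt0; have [|_ []] := legal_t t; rewrite ?t_gt0.
case: s le_skt unsettled => [|m] le_skt unsettled.
  case: (posnP t) => [t0|/fork_t/fork_wf]; last by move/settled0.
  by move: unsettled; rewrite t0 A0 => /(settled0 wf_fork1).
have le_mt : m < t by apply: leq_trans le_skt; rewrite addSn ltnS leq_addr.
have [u1 [u2 [ltu1 ltu2 depth_u1 depth_u2 split_u]]] := unsettled.
have [F' rel_F'] := unsettled_rel_margin (fork_t (leq_ltn_trans (leq0n m) le_mt))
  ltu1 ltu2 depth_u1 depth_u2 split_u.
exists (take m w), (drop m (take t w)), (drop t w).
have size_x : size (take m w) = m by rewrite size_takel // (leq_trans (ltnW le_mt)).
have xy : take m w ++ drop m (take t w) = take t w.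
  by rewrite -{1}(minn_idPl (ltnW le_mt)) take_min cat_take_drop.
split; first by rewrite catA xy cat_take_drop.
- by rewrite size_x.
- by rewrite size_drop size_takel // ltn_subRL -addSn.
- by exists F'; rewrite xy size_x.
Qed.

Theorem lemma5 (R : realFieldType) (s k T : nat) (D : {ffun T.-tuple bool -> R})
  (HD : distribution D)
  (A : T.-tuple bool -> play) (HA : forall w : T.-tuple bool, legal_play w (A w)) :
  (Pr D (fun w => wins s k w (A w))
   <= Pr D (fun w => exists x y z : seq bool,
              [/\ (w : seq bool) = x ++ y ++ z, (size x).+1 = s, (k < size y)%N
                & rel_margin_nonneg x y]))%R.
Proof.
have [D_ge0 _] := HD.
rewrite /Pr [X in (X <= _)%R]big_mkcond [X in (_ <= X)%R]big_mkcond /=.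
apply: ler_sum => w _; case: asboolP => [wins_w|_]; last by case: asboolP.
by case: asboolP => [//|[]]; exact: wins_rel_margin (HA w) wins_w.
Qed.
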